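(* Let $n$ entities move in $\mathbb{R}^d$ along piecewise-linear trajectories with vertices at common times $t_0<\dots<t_\tau$, and let $D_\sigma(t)=\max_\psi\|\sigma(t)\psi(t)\|$. The total number of intersections among the functions $D_\sigma$, $\sigma$ ranging over the entities, is $O(\tau n^3)$; here an intersection is a pair $\{\sigma,\psi\}$ together with a time $t$ such that $D_\sigma(t)=D_\psi(t)$ and $t$ is an isolated point of $\{s: D_\sigma(s)=D_\psi(s)\}$.
   Context: $\|pq\|$ denotes Euclidean distance. *)

From Stdlib Require Import Reals Lra List.
Open Scope R_scope.

(* Points of R^d are represented as functions nat -> R; only coordinates
   0..d-1 matter. *)
Definition point := nat -> R.

Fixpoint sumR (m : nat) (f : nat -> R) : R :=
  match m with
  | O => 0
  | S m' => sumR m' f + f m'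
  end.

Definition dist (d : nat) (x y : point) : R :=
  sqrt (sumR d (fun k => (x k - y k) ^ 2)).

(* max_{j < m} f j  (0 if m = 0; all values used here are >= 0) *)
Fixpoint maxR (m : nat) (f : nat -> R) : R :=
  match m with
  | O => 0
  | S m' => Rmax (maxR m' f) (f m')
  end.

Definition Dfun (d n : nat) (pos : nat -> R -> point) (sigma : nat) (t : R) : R :=
  maxR n (fun psi => dist d (pos sigma t) (pos psi t)).

Definition piecewise_linear (d n tau : nat) (times : nat -> R)
    (pos : nat -> R -> point) : Prop :=
  forall sigma i s k, (sigma < n)%nat -> (i < tau)%nat -> (k < d)%nat ->
    times i <= s <= times (S i) ->
    pos sigma s k =
      ((times (S i) - s) * pos sigma (times i) k
        + (s - times i) * pos sigma (times (S i)) k)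
      / (times (S i) - times i).

(* ({sigma, psi}, t) is an intersection: sigma < psi < n (unordered pair),
   t in the time domain [times 0, times tau], D_sigma(t) = D_psi(t), and t is an
   isolated point of {s in [times 0, times tau] : D_sigma(s) = D_psi(s)}. *)
Definition is_intersection (d n tau : nat) (times : nat -> R)
    (pos : nat -> R -> point) (sigma psi : nat) (t : R) : Prop :=
  (sigma < psi)%nat /\ (psi < n)%nat /\
  times 0%nat <= t <= times tau /\
  Dfun d n pos sigma t = Dfun d n pos psi t /\
  exists eps, 0 < eps /\
    forall s, times 0%nat <= s <= times tau -> Rabs (s - t) < eps -> s <> t ->
      Dfun d n pos sigma s <> Dfun d n pos psi s.

(* On a segment [t_i, t_(i+1)] of the trajectories every squared distance
   ||sigma psi||^2 is a quadratic polynomial in t, so D_sigma^2 is the upper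
   envelope of n functions any two of which meet at most twice unless they are
   identical.  Such an envelope changes its leading function at most 2n times
   (the order-2 Davenport-Schinzel bound).  Between consecutive change points of
   D_sigma and D_psi both are single quadratics, which have at most two isolated
   meetings; together with the segment endpoints this gives O(n) intersections
   per pair and segment, hence O(tau n^3) in total. *)

From Pilot Require Import Defs.
From Stdlib Require Import Reals List.
From Stdlib Require Import Lra Lia Classical.
Open Scope R_scope.

Lemma maxR_ge0 m f : 0 <= maxR m f.
Proof.
  induction m as [|m IH]; simpl; [lra|].
  eapply Rle_trans; [apply IH | apply Rmax_l].
Qed.

Lemma maxR_ub m f x : (x < m)%nat -> f x <= maxR m f.
Proof.
  induction m as [|m IH]; simpl; intros Hx; [lia|].
  destruct (Nat.eq_dec x m) as [->|Hne]; [apply Rmax_r|].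
  eapply Rle_trans; [apply IH; lia | apply Rmax_l].
Qed.

Lemma maxR_attained m f : (1 <= m)%nat -> (forall x, (x < m)%nat -> 0 <= f x) ->
  exists x, (x < m)%nat /\ maxR m f = f x.
Proof.
  induction m as [|m IH]; simpl; intros Hm Hf; [lia|].
  destruct (Nat.eq_dec m 0) as [->|Hm0].
  - exists 0%nat. split; [lia|]. apply Rmax_right. simpl. apply Hf; lia.
  - destruct IH as [x [Hx Hmax]]; [lia | intros; apply Hf; lia |].
    unfold Rmax. destruct (Rle_dec (maxR m f) (f m)).
    + exists m. split; auto.
    + exists x. split; auto.
Qed.

Lemma maxR_ext m f g : (forall x, (x < m)%nat -> f x = g x) -> maxR m f = maxR m g.
Proof.
  induction m as [|m IH]; simpl; intros H; auto.
  rewrite IH, H; auto.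
Qed.

Lemma maxR_sqrt m f : (forall x, 0 <= f x) ->
  maxR m (fun x => sqrt (f x)) = sqrt (maxR m f).
Proof.
  induction m as [|m IH]; simpl; intros Hf; [symmetry; apply sqrt_0|].
  rewrite IH by auto.
  pose proof (maxR_ge0 m f). pose proof (Hf m).
  unfold Rmax. destruct (Rle_dec (sqrt (maxR m f)) (sqrt (f m))) as [Hs|Hs],
    (Rle_dec (maxR m f) (f m)) as [Hl|Hl]; auto.
  - apply Rle_antisym; auto. apply sqrt_le_1; lra.
  - exfalso. apply Hs, sqrt_le_1; lra.
Qed.

Lemma sumR_ext m f g : (forall x, (x < m)%nat -> f x = g x) -> sumR m f = sumR m g.
Proof.
  induction m as [|m IH]; simpl; intros H; auto.
  rewrite IH, H; auto.
Qed.

Lemma sumR_ge0 m f : (forall x, 0 <= f x) -> 0 <= sumR m f.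
Proof.
  induction m as [|m IH]; simpl; intros Hf; [lra|].
  pose proof (Hf m). pose proof (IH Hf). lra.
Qed.

Lemma exists_not_In_between (l : list R) a b : a < b -> exists t, a < t < b /\ ~ In t l.
Proof.
  revert a b. induction l as [|c l IH]; intros a b Hab.
  - exists ((a + b) / 2). split; [lra | auto].
  - destruct (IH a b Hab) as [t [Ht Hn]].
    destruct (Req_dec t c) as [->|Hne].
    + destruct (IH a c) as [t' [Ht' Hn']]; [lra|].
      exists t'. split; [lra|]. intros [h|h]; [lra | auto].
    + exists t. split; auto. intros [h|h]; auto.
Qed.

Lemma punctured_nbhd_not_In (l : list R) r :
  exists d, 0 < d /\ forall p, 0 < Rabs (p - r) < d -> ~ In p l.
Proof.
  induction l as [|c l [d [Hd Hl]]].
  - exists 1. split; [lra | auto].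
  - destruct (Req_dec c r) as [->|Hne].
    + exists d. split; auto. intros p Hp [->|h].
      * rewrite Rminus_diag, Rabs_R0 in Hp. lra.
      * eapply Hl; eauto.
    + exists (Rmin d (Rabs (c - r))). split.
      { apply Rmin_pos; auto. apply Rabs_pos_lt. lra. }
      pose proof (Rmin_l d (Rabs (c - r))). pose proof (Rmin_r d (Rabs (c - r))).
      intros p Hp [->|h]; [lra|]. apply (Hl p); auto. lra.
Qed.

Lemma least_above (l : list R) z : (exists t, In t l /\ z < t) ->
  exists c, In c l /\ z < c /\ forall t, In t l -> z < t -> c <= t.
Proof.
  induction l as [|a l IH]; intros [t [Ht Hzt]]; [destruct Ht|].
  destruct (classic (exists t, In t l /\ z < t)) as [Hex|Hno].
  - destruct (IH Hex) as [c [Hc [Hzc Hmin]]].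
    destruct (Rlt_dec z a).
    + exists (Rmin a c). split; [unfold Rmin; destruct (Rle_dec a c); simpl; auto|].
      split; [apply Rmin_glb_lt; auto|].
      intros u [<-|h] Hu; [apply Rmin_l|]. eapply Rle_trans; [apply Rmin_r | auto].
    + exists c. split; [simpl; auto|]. split; auto. intros u [<-|h] Hu; [lra | auto].
  - destruct Ht as [->|h]; [|exfalso; apply Hno; eauto].
    exists t. split; [simpl; auto|]. split; auto.
    intros u [<-|h] Hu; [lra|]. exfalso; apply Hno; eauto.
Qed.

Lemma no_three_distinct_of_increasing (P : R -> Prop) :
  (forall x y z, P x -> P y -> P z -> x < y -> y < z -> False) ->
  forall x y z, P x -> P y -> P z -> x <> y -> y <> z -> x <> z -> False.
Proof.
  intros H x y z Hx Hy Hz Hxy Hyz Hxz.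
  destruct (Rtotal_order x y) as [h1|[h1|h1]]; [|contradiction|];
  destruct (Rtotal_order y z) as [h2|[h2|h2]]; try contradiction;
  destruct (Rtotal_order x z) as [h3|[h3|h3]]; try contradiction; try lra; eauto.
Qed.

Section Counting.
Variable A : Type.

Lemma NoDup_partition (P : A -> Prop) (l : list A) : NoDup l -> exists l1 l2,
  NoDup l1 /\ NoDup l2 /\ (forall x, In x l1 -> In x l /\ P x) /\
  (forall x, In x l2 -> In x l /\ ~ P x) /\ length l = (length l1 + length l2)%nat.
Proof.
  induction l as [|a l IH]; intros Hnd.
  - exists nil, nil. simpl. repeat split; try apply NoDup_nil; tauto.
  - apply NoDup_cons_iff in Hnd as [Ha Hl].
    destruct (IH Hl) as [l1 [l2 [N1 [N2 [P1 [P2 Hlen]]]]]].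
    destruct (classic (P a)) as [HP|HP].
    + exists (a :: l1), l2. split; [|split; [|split; [|split]]]; auto.
      * constructor; auto. intro h. apply Ha, P1; auto.
      * intros y [<-|h]; [simpl; auto|]. apply P1 in h. simpl; tauto.
      * intros y h. apply P2 in h. simpl; tauto.
      * simpl; lia.
    + exists l1, (a :: l2). split; [|split; [|split; [|split]]]; auto.
      * constructor; auto. intro h. apply Ha, P2; auto.
      * intros y h. apply P1 in h. simpl; tauto.
      * intros y [<-|h]; [simpl; auto|]. apply P2 in h. simpl; tauto.
      * simpl; lia.
Qed.

Lemma NoDup_restriction (P : A -> Prop) (l : list A) : exists l',
  NoDup l' /\ forall x, In x l' <-> In x l /\ P x.
Proof.
  induction l as [|a l [l' [Hnd Hl']]].
  - exists nil. split; [constructor | simpl; tauto].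
  - destruct (classic (P a /\ ~ In a l')) as [[Ha Hn]|Hn].
    + exists (a :: l'). split; [constructor; auto|].
      intros x; simpl; rewrite Hl'. split; [intros [<-|h]; tauto | intros [[<-|h] hp]; auto].
    + exists l'. split; auto. intros x. rewrite Hl'. simpl. split; [tauto|].
      intros [[<-|h] hp]; auto. split; auto.
      apply NNPP; intro h'. apply Hn; split; auto. rewrite Hl'. tauto.
Qed.

Lemma NoDup_length_le_1 (l : list A) : NoDup l ->
  (forall a b, In a l -> In b l -> a = b) -> (length l <= 1)%nat.
Proof.
  intros Hnd H. destruct l as [|a [|b l]]; simpl; try lia. exfalso.
  apply NoDup_cons_iff in Hnd as [Ha _]. apply Ha. rewrite (H a b); simpl; auto.
Qed.

Lemma NoDup_length_le_2 (l : list A) : NoDup l ->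
  (forall a b c, In a l -> In b l -> In c l -> a <> b -> b <> c -> a <> c -> False) ->
  (length l <= 2)%nat.
Proof.
  intros Hnd H. destruct l as [|a [|b [|c l]]]; simpl; try lia. exfalso.
  apply NoDup_cons_iff in Hnd as [Ha Hnd]. apply NoDup_cons_iff in Hnd as [Hb _].
  apply (H a b c); simpl; auto; intros ->; simpl in *; tauto.
Qed.

Lemma NoDup_length_le_cover {I : Type} (cls : I -> A -> Prop) (ks : list I) c (l : list A) :
  NoDup l -> (forall a, In a l -> exists k, In k ks /\ cls k a) ->
  (forall k l', In k ks -> NoDup l' -> (forall a, In a l' -> cls k a) -> (length l' <= c)%nat) ->
  (length l <= length ks * c)%nat.
Proof.
  revert l. induction ks as [|k ks IH]; intros l Hnd Hcov Hcls.
  - destruct l as [|a l]; simpl; auto. destruct (Hcov a) as [k [[] _]]. simpl; auto.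
  - destruct (NoDup_partition (cls k) l Hnd) as [l1 [l2 [N1 [N2 [P1 [P2 Hlen]]]]]].
    assert (length l1 <= c)%nat.
    { apply (Hcls k); simpl; auto. intros a Ha. apply P1; auto. }
    assert (length l2 <= length ks * c)%nat.
    { apply IH; auto.
      - intros a Ha. destruct (P2 a Ha) as [Hin Hn].
        destruct (Hcov a Hin) as [k' [[<-|Hk'] Hc]]; [contradiction | eauto].
      - intros k' l' Hk'. apply Hcls. simpl; auto. }
    simpl. lia.
Qed.

End Counting.

(** * Functions meeting at most twice *)

Definition meets_at_most_twice (f g : R -> R) : Prop :=
  forall t1 t2 t3, t1 <> t2 -> t2 <> t3 -> t1 <> t3 ->
    f t1 = g t1 -> f t2 = g t2 -> f t3 = g t3 -> forall t, f t = g t.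

Definition quadratic (f : R -> R) : Prop :=
  exists a b c, forall t, f t = a * t ^ 2 + b * t + c.

Lemma quadratic_three_roots a b c x y z : x <> y -> y <> z -> x <> z ->
  a * x ^ 2 + b * x + c = 0 -> a * y ^ 2 + b * y + c = 0 -> a * z ^ 2 + b * z + c = 0 ->
  a = 0 /\ b = 0 /\ c = 0.
Proof.
  intros Hxy Hyz Hxz Hx Hy Hz.
  assert (Exy : a * (x + y) + b = 0).
  { apply Rmult_eq_reg_r with (x - y); [|lra].
    replace ((a * (x + y) + b) * (x - y)) with
      ((a * x ^ 2 + b * x + c) - (a * y ^ 2 + b * y + c)) by ring. lra. }
  assert (Exz : a * (x + z) + b = 0).
  { apply Rmult_eq_reg_r with (x - z); [|lra].
    replace ((a * (x + z) + b) * (x - z)) with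
      ((a * x ^ 2 + b * x + c) - (a * z ^ 2 + b * z + c)) by ring. lra. }
  assert (Ha : a = 0).
  { apply Rmult_eq_reg_r with (y - z); [|lra].
    replace (a * (y - z)) with ((a * (x + y) + b) - (a * (x + z) + b)) by ring. lra. }
  subst a. assert (b = 0) by lra. subst b. repeat split; lra.
Qed.

Lemma quadratic_meets_at_most_twice f g :
  quadratic (fun t => f t - g t) -> meets_at_most_twice f g.
Proof.
  intros [a [b [c Hq]]] t1 t2 t3 H12 H23 H13 E1 E2 E3 t.
  destruct (quadratic_three_roots a b c t1 t2 t3) as [-> [-> ->]];
    rewrite <- ?Hq; auto; try lra.
  specialize (Hq t). lra.
Qed.

Lemma quadratic_sub f g : quadratic f -> quadratic g -> quadratic (fun t => f t - g t).
Proof.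
  intros [a [b [c Hf]]] [a' [b' [c' Hg]]]. exists (a - a'), (b - b'), (c - c').
  intros t. rewrite Hf, Hg. ring.
Qed.

Lemma quadratic_sumR m (f : nat -> R -> R) : (forall k, quadratic (f k)) ->
  quadratic (fun t => sumR m (fun k => f k t)).
Proof.
  induction m as [|m IH]; simpl; intros Hf.
  - exists 0, 0, 0. intros; ring.
  - destruct (IH Hf) as [a [b [c H1]]]. destruct (Hf m) as [a' [b' [c' H2]]].
    exists (a + a'), (b + b'), (c + c'). intros t. rewrite H1, H2. ring.
Qed.

Lemma quadratic_square_affine a b : quadratic (fun t => (a + b * t) ^ 2).
Proof. exists (b * b), (2 * a * b), (a * a). intros; ring. Qed.

Lemma quadratic_continuity f : quadratic f -> continuity f.
Proof.
  intros [a [b [c Hf]]].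
  assert (Hq : continuity (fun t => a * t ^ 2 + b * t + c)) by reg.
  intros x eps Heps. destruct (Hq x eps Heps) as [d [Hd Hlim]].
  exists d. split; auto. intros y Hy. rewrite !Hf. apply Hlim; auto.
Qed.

Lemma coincidences_finite f g : meets_at_most_twice f g -> (exists s, f s <> g s) ->
  exists l, forall t, f t = g t -> In t l.
Proof.
  intros Hfg [s Hs].
  destruct (classic (exists r1, f r1 = g r1)) as [[r1 H1]|Hno].
  2: { exists nil. intros t Ht. apply Hno; eauto. }
  destruct (classic (exists r2, r2 <> r1 /\ f r2 = g r2)) as [[r2 [H21 H2]]|Hno].
  2: { exists (r1 :: nil). intros t Ht. destruct (Req_dec t r1) as [->|Hne]; simpl; auto.
       exfalso; apply Hno; eauto. }
  exists (r1 :: r2 :: nil). intros t Ht.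
  destruct (Req_dec t r1) as [->|H1']; simpl; auto.
  destruct (Req_dec t r2) as [->|H2']; simpl; auto.
  exfalso. apply Hs, (Hfg r1 r2 t); auto.
Qed.

Lemma finite_union_In N (P : nat -> R -> Prop) :
  (forall x, (x < N)%nat -> exists l, forall t, P x t -> In t l) ->
  exists l, forall x t, (x < N)%nat -> P x t -> In t l.
Proof.
  induction N as [|N IH]; intros H.
  - exists nil. intros; lia.
  - destruct IH as [l1 Hl1]; [intros; apply H; lia|].
    destruct (H N) as [l2 Hl2]; [lia|].
    exists (l1 ++ l2). intros x t Hx Hp. apply in_or_app.
    destruct (Nat.eq_dec x N) as [->|Hne]; [right; auto | left; apply (Hl1 x); auto; lia].
Qed.

Lemma crossings_finite m (G : nat -> R -> R) :
  (forall x y, (x < m)%nat -> (y < m)%nat -> meets_at_most_twice (G x) (G y)) ->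
  exists l, forall x y t, (x < m)%nat -> (y < m)%nat -> G x t = G y t ->
    (exists s, G x s <> G y s) -> In t l.
Proof.
  intros HG.
  destruct (finite_union_In m
    (fun x t => exists y, (y < m)%nat /\ G x t = G y t /\ exists s, G x s <> G y s))
    as [l Hl].
  - intros x Hx.
    destruct (finite_union_In m (fun y t => G x t = G y t /\ exists s, G x s <> G y s))
      as [l Hl]; [|exists l; intros t [y [Hy Ht]]; eauto].
    intros y Hy. destruct (classic (exists s, G x s <> G y s)) as [Hne|Hid].
    + destruct (coincidences_finite _ _ (HG x y Hx Hy) Hne) as [l Hl].
      exists l. intros t [Ht _]; auto.
    + exists nil. intros t [_ Ht]. contradiction.
  - exists l. intros x y t Hx Hy Ht Hne. apply (Hl x t Hx). eauto.
Qed.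

Lemma continuous_crossing f g p q : continuity f -> continuity g -> p < q ->
  (f p - g p) * (f q - g q) < 0 -> exists z, p < z < q /\ f z = g z.
Proof.
  intros Hf Hg Hpq Hsign.
  destruct (IVT_cor (fun t => f t - g t) p q) as [z [Hz Hz0]];
    [apply continuity_minus; auto | lra | lra |].
  exists z. split; [|lra].
  split; apply Rnot_le_lt; intro Hle;
    [replace z with p in Hz0 by lra | replace z with q in Hz0 by lra];
    rewrite Hz0 in Hsign; lra.
Qed.

(** * Upper envelopes *)

Definition envelope (m : nat) (G : nat -> R -> R) (t : R) : R := maxR m (fun x => G x t).

Definition leader (m : nat) (G : nat -> R -> R) (t : R) (x : nat) : Prop :=
  (x < m)%nat /\ G x t = envelope m G t /\
  forall y, (y < x)%nat -> G y t <> envelope m G t.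

(** [B] lists every point of [(a, b)] where two members of the family meet
    without being identical. *)
Definition family_with_crossings (m : nat) (a b : R) (G : nat -> R -> R) (B : list R) : Prop :=
  (1 <= m)%nat /\ (forall x t, 0 <= G x t) /\ (forall x, continuity (G x)) /\
  (forall x y, (x < m)%nat -> (y < m)%nat -> meets_at_most_twice (G x) (G y)) /\
  (forall x y t, (x < m)%nat -> (y < m)%nat -> a < t < b -> G x t = G y t ->
     (exists s, G x s <> G y s) -> In t B).

Lemma leader_unique m G t x y : leader m G t x -> leader m G t y -> x = y.
Proof.
  intros [_ [Ex Hx]] [_ [Ey Hy]].
  destruct (Nat.lt_total x y) as [h|[h|h]]; auto; exfalso.
  - exact (Hy x h Ex).
  - exact (Hx y h Ey).
Qed.

Section UpperEnvelope.

Variables (m : nat) (a b : R) (G : nat -> R -> R) (B : list R).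
Hypothesis HG : family_with_crossings m a b G B.

Let G_cont x : continuity (G x).
Proof. apply HG. Qed.

Let G_twice x y : (x < m)%nat -> (y < m)%nat -> meets_at_most_twice (G x) (G y).
Proof. apply HG. Qed.

Let G_crossing x y t : (x < m)%nat -> (y < m)%nat -> a < t < b -> G x t = G y t ->
  (exists s, G x s <> G y s) -> In t B.
Proof. apply HG. Qed.

Lemma leader_exists t : exists x, leader m G t x.
Proof.
  destruct HG as [Hm [Hge0 _]].
  destruct (maxR_attained m (fun x => G x t) Hm) as [x0 [Hx0 Hmax]]; [intros; apply Hge0|].
  set (P x := (x < m)%nat /\ G x t = envelope m G t).
  destruct (Wf_nat.dec_inh_nat_subset_has_unique_least_element P)
    as [x [[[Hx HxE] Hleast] _]]; [intros; apply classic | exists x0; split; auto|].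
  exists x. split; [|split]; auto.
  intros y Hy HyE. specialize (Hleast y). unfold P in Hleast.
  assert (x <= y)%nat by (apply Hleast; split; auto; lia). lia.
Qed.

Lemma leader_strict t s x y : a < t < b -> ~ In t B ->
  leader m G t x -> leader m G s y -> x <> y -> G y t < G x t.
Proof.
  intros Ht HtB [Hx [HxE Hxmin]] [Hy [HyE Hymin]] Hxy.
  assert (Hle : G y t <= G x t) by (rewrite HxE; apply (maxR_ub m (fun z => G z t)); auto).
  destruct Hle as [|Heq]; auto. exfalso.
  destruct (classic (exists s, G x s <> G y s)) as [Hne|Hid].
  - apply HtB. apply (G_crossing x y t); auto.
  - assert (Hid' : forall s, G x s = G y s).
    { intros u. apply NNPP. intro h. apply Hid; eauto. }
    destruct (Nat.lt_total x y) as [h|[h|h]]; [| contradiction |].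
    + apply (Hymin x h). rewrite Hid'. auto.
    + apply (Hxmin y h). rewrite Heq. auto.
Qed.

Lemma leader_const_free p q x y : a < p -> p < q -> q < b ->
  (forall r, p <= r <= q -> ~ In r B) -> leader m G p x -> leader m G q y -> x = y.
Proof.
  intros Hp Hpq Hq Hfree Hx Hy.
  destruct (Nat.eq_dec x y) as [|Hxy]; auto. exfalso.
  assert (Sp : G y p < G x p) by (apply (leader_strict p q); auto; [lra | apply Hfree; lra]).
  assert (Sq : G x q < G y q) by (apply (leader_strict q p); auto; [lra | apply Hfree; lra]).
  destruct (continuous_crossing (G x) (G y) p q) as [z [Hz Hzeq]]; auto.
  { apply Rmult_pos_neg; lra. }
  apply (Hfree z); [lra|].
  apply (G_crossing x y z); [apply Hx | apply Hy | lra | auto |].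
  exists p. lra.
Qed.

Lemma leader_const_free_interval l r p q x y : a <= l -> r <= b ->
  (forall s, l < s < r -> ~ In s B) -> l < p < r -> l < q < r ->
  leader m G p x -> leader m G q y -> x = y.
Proof.
  intros Hl Hr Hfree Hp Hq Hx Hy.
  destruct (Rtotal_order p q) as [h|[->|h]].
  - eapply leader_const_free; eauto; try lra. intros s Hs. apply Hfree. lra.
  - eapply leader_unique; eauto.
  - symmetry. eapply leader_const_free; eauto; try lra. intros s Hs. apply Hfree. lra.
Qed.

Definition left_leader (r : R) (x : nat) : Prop :=
  exists d, 0 < d /\ forall p, r - d < p < r -> ~ In p B -> leader m G p x.
Definition right_leader (r : R) (x : nat) : Prop :=
  exists d, 0 < d /\ forall p, r < p < r + d -> ~ In p B -> leader m G p x.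

Lemma left_leader_exists r : a < r < b -> exists x, left_leader r x.
Proof.
  intros Hr. destruct (punctured_nbhd_not_In B r) as [d [Hd Hfree]].
  pose proof (Rmin_l d (r - a)). pose proof (Rmin_r d (r - a)).
  set (e := Rmin d (r - a)) in *.
  assert (He : 0 < e) by (apply Rmin_pos; lra).
  destruct (exists_not_In_between B (r - e) r) as [p0 [Hp0 Hp0B]]; [lra|].
  destruct (leader_exists p0) as [x Hx].
  exists x, e. split; auto. intros p Hp HpB.
  destruct (leader_exists p) as [x' Hx'].
  replace x with x'; auto.
  apply (leader_const_free_interval (r - e) r p p0); auto; try lra.
  intros s Hs. apply Hfree. rewrite Rabs_left; lra.
Qed.

Lemma right_leader_exists r : a < r < b -> exists x, right_leader r x.
Proof.
  intros Hr. destruct (punctured_nbhd_not_In B r) as [d [Hd Hfree]].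
  pose proof (Rmin_l d (b - r)). pose proof (Rmin_r d (b - r)).
  set (e := Rmin d (b - r)) in *.
  assert (He : 0 < e) by (apply Rmin_pos; lra).
  destruct (exists_not_In_between B r (r + e)) as [p0 [Hp0 Hp0B]]; [lra|].
  destruct (leader_exists p0) as [x Hx].
  exists x, e. split; auto. intros p Hp HpB.
  destruct (leader_exists p) as [x' Hx'].
  replace x with x'; auto.
  apply (leader_const_free_interval r (r + e) p p0); auto; try lra.
  intros s Hs. apply Hfree. rewrite Rabs_right; lra.
Qed.

Lemma left_leader_witness r x lo : left_leader r x -> lo < r ->
  exists p, lo < p < r /\ ~ In p B /\ leader m G p x.
Proof.
  intros [d [Hd Hlead]] Hlo.
  destruct (exists_not_In_between B (Rmax lo (r - d)) r) as [p [Hp HpB]].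
  { apply Rmax_lub_lt; lra. }
  pose proof (Rmax_l lo (r - d)). pose proof (Rmax_r lo (r - d)).
  exists p. split; [lra|]. split; auto. apply Hlead; auto. lra.
Qed.

Lemma right_leader_witness r x hi : right_leader r x -> r < hi ->
  exists p, r < p < hi /\ ~ In p B /\ leader m G p x.
Proof.
  intros [d [Hd Hlead]] Hhi.
  destruct (exists_not_In_between B r (Rmin hi (r + d))) as [p [Hp HpB]].
  { apply Rmin_glb_lt; lra. }
  pose proof (Rmin_l hi (r + d)). pose proof (Rmin_r hi (r + d)).
  exists p. split; [lra|]. split; auto. apply Hlead; auto. lra.
Qed.

Definition change_point (r : R) : Prop :=
  a < r < b /\ exists x y, left_leader r x /\ right_leader r y /\ x <> y.

Lemma change_point_In r : change_point r -> In r B.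
Proof.
  intros [Hr [x [y [Hx [Hy Hxy]]]]]. apply NNPP. intro HrB.
  destruct (punctured_nbhd_not_In B r) as [d [Hd Hfree]].
  destruct (left_leader_witness r x (Rmax (r - d) a) Hx) as [p [Hp [HpB Hpx]]].
  { apply Rmax_lub_lt; lra. }
  destruct (right_leader_witness r y (Rmin (r + d) b) Hy) as [q [Hq [HqB Hqy]]].
  { apply Rmin_glb_lt; lra. }
  pose proof (Rmax_l (r - d) a). pose proof (Rmax_r (r - d) a).
  pose proof (Rmin_l (r + d) b). pose proof (Rmin_r (r + d) b).
  apply Hxy, (leader_const_free p q); auto; try lra.
  intros s Hs. destruct (Req_dec s r) as [->|Hsr]; auto.
  apply Hfree. split; [apply Rabs_pos_lt; lra | apply Rabs_def1; lra].
Qed.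

(** Induction on a list [C] containing the crossings in [(p, q)]; a crossing
    that is not a change point is removed by passing through its left and
    right leaders, which agree. *)
Lemma leader_const_no_change p q x y : a < p -> p < q -> q < b -> ~ In p B -> ~ In q B ->
  (forall r, p < r < q -> ~ change_point r) -> leader m G p x -> leader m G q y -> x = y.
Proof.
  revert p q x y.
  cut (forall C p q x y, (forall r, p < r < q -> In r B -> In r C) ->
    a < p -> p < q -> q < b -> ~ In p B -> ~ In q B ->
    (forall r, p < r < q -> ~ change_point r) -> leader m G p x -> leader m G q y -> x = y).
  { intros Hind p q x y. apply (Hind B). auto. }
  induction C as [|c C IH]; intros p q x y HC Hp Hpq Hq HpB HqB Hnochg Hx Hy.
  - apply (leader_const_free p q); auto.
    intros r Hr HrB. destruct (Req_dec r p) as [->|]; auto. destruct (Req_dec r q) as [->|]; auto.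
    apply (HC r); auto. lra.
  - destruct (classic (p < c < q /\ In c B)) as [[Hc HcB]|Hc].
    2: { apply (IH p q); auto. intros r Hr HrB. destruct (HC r Hr HrB) as [->|]; tauto. }
    destruct (left_leader_exists c) as [z Hz]; [lra|].
    destruct (right_leader_exists c) as [z' Hz']; [lra|].
    assert (z' = z).
    { apply NNPP. intro Hne. apply (Hnochg c Hc). split; [lra|]. exists z, z'. auto. }
    subst z'.
    destruct (left_leader_witness c z p Hz) as [p' [Hp' [Hp'B Hp'z]]]; [lra|].
    destruct (right_leader_witness c z q Hz') as [q' [Hq' [Hq'B Hq'z]]]; [lra|].
    transitivity z.
    + apply (IH p p'); auto; try lra.
      * intros r Hr HrB. destruct (HC r ltac:(lra) HrB) as [->|]; auto. lra.
      * intros r Hr. apply Hnochg. lra.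
    + apply (IH q' q); auto; try lra.
      * intros r Hr HrB. destruct (HC r ltac:(lra) HrB) as [->|]; auto. lra.
      * intros r Hr. apply Hnochg. lra.
Qed.

Lemma envelope_right_leader z x d : 0 < d ->
  (forall q, z < q < z + d -> ~ In q B -> leader m G q x) -> envelope m G z = G x z.
Proof.
  intros Hd Hlead.
  assert (Hx : (x < m)%nat).
  { destruct (exists_not_In_between B z (z + d)) as [q [Hq HqB]]; [lra|].
    apply (Hlead q Hq HqB). }
  assert (Hle : forall y, (y < m)%nat -> G y z <= G x z).
  { intros y Hy. apply Rnot_lt_le. intro Hlt.
    destruct (continuity_minus (G y) (G x) (G_cont y) (G_cont x) z ((G y z - G x z) / 2))
      as [e [He Hlim]]; [lra|].
    destruct (exists_not_In_between B z (z + Rmin d e)) as [q [Hq HqB]].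
    { pose proof (Rmin_pos d e Hd He). lra. }
    pose proof (Rmin_l d e). pose proof (Rmin_r d e).
    destruct (Hlead q ltac:(lra) HqB) as [_ [HqE _]].
    assert (G y q <= G x q) by (rewrite HqE; apply (maxR_ub m (fun u => G u q)); auto).
    assert (Hdist : R_dist q z < e) by (unfold R_dist; rewrite Rabs_right; lra).
    assert (Hzq : D_x no_cond z q) by (split; [exact I | lra]).
    specialize (Hlim q (conj Hzq Hdist)).
    simpl in Hlim. unfold R_dist, minus_fct in Hlim. apply Rabs_def2 in Hlim. lra. }
  destruct HG as [Hm [Hge0 _]].
  destruct (maxR_attained m (fun u => G u z) Hm) as [y [Hy Hmax]]; [intros; apply Hge0|].
  unfold envelope. rewrite Hmax. apply Rle_antisym; [apply Hle; auto|].
  rewrite <- Hmax. apply (maxR_ub m (fun u => G u z)). auto.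
Qed.


Lemma leader_fixed_on_interval l r p x : a <= l -> r <= b ->
  (forall s, l < s < r -> ~ change_point s) ->
  l < p < r -> ~ In p B -> leader m G p x ->
  forall q, l < q < r -> ~ In q B -> leader m G q x.
Proof.
  intros Hl Hr Hnochg Hp HpB Hx q Hq HqB.
  destruct (leader_exists q) as [y Hy].
  replace x with y; auto.
  destruct (Rtotal_order p q) as [h|[<-|h]].
  - symmetry. apply (leader_const_no_change p q); auto; try lra.
    intros s Hs. apply Hnochg. lra.
  - eapply leader_unique; eauto.
  - apply (leader_const_no_change q p); auto; try lra.
    intros s Hs. apply Hnochg. lra.
Qed.


Definition fresh_change (r : R) (k : nat) : Prop :=
  right_leader r k /\ forall p, a < p < r -> ~ In p B -> ~ leader m G p k.

Definition returning_change (r : R) (k : nat) : Prop :=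
  left_leader r k /\ exists y, y <> k /\ right_leader r y /\
    exists p, a < p < r /\ ~ In p B /\ leader m G p y.

Lemma fresh_change_unique r r' k : a < r -> r < r' ->
  fresh_change r k -> fresh_change r' k -> False.
Proof.
  intros Hr Hrr' [Hk _] [_ Hnever].
  destruct (right_leader_witness r k r' Hk Hrr') as [p [Hp [HpB Hpk]]].
  apply (Hnever p); auto. lra.
Qed.

(** Between [r] and [r'] the other leader [y] and [k] alternate four times,
    so [G y - G k] vanishes three times and the two members coincide. *)
Lemma returning_change_unique r r' k : a < r -> r < r' -> r' < b ->
  returning_change r k -> returning_change r' k -> False.
Proof.
  intros Hr Hrr' Hr'
    [Hk [y [Hyk [Hy [p0 [Hp0 [Hp0B Hp0y]]]]]]] [Hk' _].
  destruct (left_leader_witness r k p0 Hk) as [p1 [Hp1 [Hp1B Hp1k]]]; [lra|].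
  destruct (right_leader_witness r y r' Hy Hrr') as [p2 [Hp2 [Hp2B Hp2y]]].
  destruct (left_leader_witness r' k p2 Hk') as [p3 [Hp3 [Hp3B Hp3k]]]; [lra|].
  assert (S0 : G k p0 < G y p0) by (apply (leader_strict p0 p1); auto; lra).
  assert (S1 : G y p1 < G k p1) by (apply (leader_strict p1 p0); auto; lra).
  assert (S2 : G k p2 < G y p2) by (apply (leader_strict p2 p1); auto; lra).
  assert (S3 : G y p3 < G k p3) by (apply (leader_strict p3 p2); auto; lra).
  destruct (continuous_crossing (G y) (G k) p0 p1) as [z1 [Hz1 E1]];
    auto; [lra | apply Rmult_pos_neg; lra |].
  destruct (continuous_crossing (G y) (G k) p1 p2) as [z2 [Hz2 E2]];
    auto; [lra | apply Rmult_neg_pos; lra |].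
  destruct (continuous_crossing (G y) (G k) p2 p3) as [z3 [Hz3 E3]];
    auto; [lra | apply Rmult_pos_neg; lra |].
  assert (Hyk_id := G_twice y k (proj1 Hp0y) (proj1 Hp1k) z1 z2 z3).
  assert (G y p0 = G k p0) by (apply Hyk_id; auto; lra). lra.
Qed.

(** At a change point either the new leader has never led before, or the old
    leader is left for one that led earlier; each index plays each role at most
    once. *)
Lemma change_points_length (l : list R) : NoDup l ->
  (forall r, In r l -> change_point r) -> (length l <= 2 * m)%nat.
Proof.
  intros Hnd Hchg.
  assert (Hlt : forall r x, In r l -> left_leader r x \/ right_leader r x -> (x < m)%nat).
  { intros r x Hr [Hx|Hx]; destruct (Hchg r Hr) as [Hab _].
    - destruct (left_leader_witness r x a Hx) as [p [_ [_ [Hxm _]]]]; auto. lra.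
    - destruct (right_leader_witness r x b Hx) as [p [_ [_ [Hxm _]]]]; auto. lra. }
  assert (Hclass : forall (P : R -> nat -> Prop),
    (forall r r' k, In r l -> In r' l -> r < r' -> P r k -> P r' k -> False) ->
    forall k l', NoDup l' -> (forall r, In r l' -> In r l /\ P r k) -> (length l' <= 1)%nat).
  { intros P Hinj k l' Hnd' Hl'. apply NoDup_length_le_1; auto. intros r r' Hr Hr'.
    destruct (Hl' r Hr) as [Hrl HPr], (Hl' r' Hr') as [Hr'l HPr'].
    destruct (Rtotal_order r r') as [h|[h|h]]; auto; exfalso.
    - exact (Hinj r r' k Hrl Hr'l h HPr HPr').
    - exact (Hinj r' r k Hr'l Hrl h HPr' HPr). }
  destruct (NoDup_partition R (fun r => exists k, fresh_change r k) l Hnd)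
    as [l1 [l2 [N1 [N2 [P1 [P2 Hlen]]]]]].
  assert (length l1 <= length (seq 0 m) * 1)%nat.
  { apply (NoDup_length_le_cover R (fun k r => In r l /\ fresh_change r k)); auto.
    - intros r Hr. destruct (P1 r Hr) as [Hin [k Hk]]. exists k.
      split; [apply in_seq; split; [lia|]; apply (Hlt r k); auto; right; apply Hk | auto].
    - intros k l' _. apply (Hclass (fun r k => fresh_change r k)).
      intros r r' k' Hr _ Hrr'. apply fresh_change_unique; auto. apply (Hchg r Hr). }
  assert (length l2 <= length (seq 0 m) * 1)%nat.
  { apply (NoDup_length_le_cover R (fun k r => In r l /\ returning_change r k)); auto.
    - intros r Hr. destruct (P2 r Hr) as [Hin Hnotfresh].
      destruct (Hchg r Hin) as [Hab [x [y [Hx [Hy Hxy]]]]].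
      exists x. split; [apply in_seq; split; [lia|]; apply (Hlt r x); auto|].
      split; auto. split; auto. exists y. split; auto. split; auto.
      apply NNPP. intro Hnever. apply Hnotfresh. exists y. split; auto.
      intros p Hp HpB Hpy. apply Hnever. eauto.
    - intros k l' _. apply (Hclass (fun r k => returning_change r k)).
      intros r r' k' Hr Hr' Hrr'. apply returning_change_unique; auto;
        [apply (Hchg r Hr) | apply (Hchg r' Hr')]. }
  rewrite length_seq in *. lia.
Qed.
End UpperEnvelope.

(** * Isolated meetings of two envelopes *)

Definition isolated_meeting (a b : R) (f g : R -> R) (z : R) : Prop :=
  a < z < b /\ f z = g z /\ exists eps, 0 < eps /\
    forall s, a < s < b -> Rabs (s - z) < eps -> s <> z -> f s <> g s.

Section TwoEnvelopes.

Variables (m : nat) (a b : R) (G1 G2 : nat -> R -> R) (B : list R).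
Hypothesis HG1 : family_with_crossings m a b G1 B.
Hypothesis HG2 : family_with_crossings m a b G2 B.
Hypothesis G12_twice :
  forall x y, (x < m)%nat -> (y < m)%nat -> meets_at_most_twice (G1 x) (G2 y).

Let meeting := isolated_meeting a b (envelope m G1) (envelope m G2).

(** On a stretch without change points both envelopes are single members,
    which cannot meet three times without coinciding. *)
Lemma three_isolated_meetings_absurd z1 z2 z3 c : z1 < z2 -> z2 < z3 -> z3 < c -> c <= b ->
  meeting z1 -> meeting z2 -> meeting z3 ->
  (forall r, z1 < r < c -> ~ change_point m a b G1 B r) ->
  (forall r, z1 < r < c -> ~ change_point m a b G2 B r) -> False.
Proof.
  intros H12 H23 H3c Hcb M1 M2 M3 Hno1 Hno2.
  assert (Hz1 : a < z1) by apply M1.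
  destruct (exists_not_In_between B z1 z2 H12) as [p [Hp HpB]].
  destruct (leader_exists m a b G1 B HG1 p) as [x Hx].
  destruct (leader_exists m a b G2 B HG2 p) as [y Hy].
  assert (L1 := leader_fixed_on_interval m a b G1 B HG1 z1 c p x ltac:(lra) Hcb Hno1 ltac:(lra) HpB Hx).
  assert (L2 := leader_fixed_on_interval m a b G2 B HG2 z1 c p y ltac:(lra) Hcb Hno2 ltac:(lra) HpB Hy).
  assert (Hmeet : forall z, z1 <= z < c -> meeting z -> G1 x z = G2 y z).
  { intros z Hz [_ [Hzeq _]].
    rewrite <- (envelope_right_leader m a b G1 B HG1 z x (c - z)),
      <- (envelope_right_leader m a b G2 B HG2 z y (c - z)); auto; try lra;
      intros q Hq HqB; [apply L2 | apply L1]; auto; lra. }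
  assert (Hid := G12_twice x y (proj1 Hx) (proj1 Hy) z1 z2 z3 ltac:(lra) ltac:(lra) ltac:(lra)
    (Hmeet z1 ltac:(lra) M1) (Hmeet z2 ltac:(lra) M2) (Hmeet z3 ltac:(lra) M3)).
  destruct M1 as [_ [_ [eps [Heps Hiso]]]].
  destruct (exists_not_In_between B z1 (Rmin (z1 + eps) z2)) as [q [Hq HqB]].
  { apply Rmin_glb_lt; lra. }
  pose proof (Rmin_l (z1 + eps) z2). pose proof (Rmin_r (z1 + eps) z2).
  apply (Hiso q); [lra | rewrite Rabs_right; lra | lra |].
  destruct (L1 q ltac:(lra) HqB) as [_ [E1 _]]. destruct (L2 q ltac:(lra) HqB) as [_ [E2 _]].
  rewrite <- E1, <- E2. apply Hid.
Qed.

(** Each meeting is charged to the next change point of either envelope (or to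
    [b]); no point is charged three times. *)
Lemma isolated_meetings_length (Z : list R) : NoDup Z ->
  (forall z, In z Z -> meeting z) -> (length Z <= (4 * m + 1) * 2)%nat.
Proof.
  intros Hnd HZ.
  destruct (NoDup_restriction R (change_point m a b G1 B) B) as [Q1 [N1 HQ1]].
  destruct (NoDup_restriction R (change_point m a b G2 B) B) as [Q2 [N2 HQ2]].
  assert (L1 : (length Q1 <= 2 * m)%nat).
  { apply (change_points_length m a b G1 B HG1 Q1 N1). intros r Hr. apply HQ1, Hr. }
  assert (L2 : (length Q2 <= 2 * m)%nat).
  { apply (change_points_length m a b G2 B HG2 Q2 N2). intros r Hr. apply HQ2, Hr. }
  set (T := Q1 ++ Q2 ++ b :: nil).
  assert (HbT : In b T) by (apply in_or_app; right; apply in_or_app; right; simpl; auto).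
  assert (HTb : forall t, In t T -> t <= b).
  { intros t Ht. apply in_app_or in Ht as [Ht|Ht]; [|apply in_app_or in Ht as [Ht|[<-|[]]]].
    - apply HQ1 in Ht as [_ [[_ Ht] _]]. lra.
    - apply HQ2 in Ht as [_ [[_ Ht] _]]. lra.
    - lra. }
  assert (Hchg1 : forall r, change_point m a b G1 B r -> In r T).
  { intros r Hr. apply in_or_app. left. apply HQ1. split; auto.
    apply (change_point_In m a b G1 B HG1 r Hr). }
  assert (Hchg2 : forall r, change_point m a b G2 B r -> In r T).
  { intros r Hr. apply in_or_app. right. apply in_or_app. left. apply HQ2. split; auto.
    apply (change_point_In m a b G2 B HG2 r Hr). }
  assert (length Z <= length T * 2)%nat.
  { apply (NoDup_length_le_cover R
      (fun t z => In z Z /\ z < t /\ forall t', In t' T -> z < t' -> t <= t')); auto.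
    - intros z Hz. destruct (least_above T z) as [c [Hc [Hzc Hmin]]].
      + exists b. split; auto. apply HZ; auto.
      + exists c. auto.
    - intros t l' Ht Hnd' Hl'. apply NoDup_length_le_2; auto.
      intros z1 z2 z3 Hz1 Hz2 Hz3.
      apply (no_three_distinct_of_increasing (fun z => In z l')); auto.
      clear z1 z2 z3 Hz1 Hz2 Hz3. intros z1 z2 z3 Hz1 Hz2 Hz3 H12 H23.
      destruct (Hl' z1 Hz1) as [Z1 [_ Hmin]], (Hl' z2 Hz2) as [Z2 _],
        (Hl' z3 Hz3) as [Z3 [Hz3t _]].
      apply (three_isolated_meetings_absurd z1 z2 z3 t); auto;
        intros r Hr Hchg; [apply Hchg1 in Hchg | apply Hchg2 in Hchg];
        assert (t <= r) by (apply Hmin; auto; lra); lra. }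
  unfold T in *. rewrite !length_app in *. simpl in *. lia.
Qed.

End TwoEnvelopes.

(** * Piecewise-linear trajectories *)

Definition segment_pos (times : nat -> R) (pos : nat -> R -> point) (i sigma k : nat) (t : R) : R :=
  ((times (S i) - t) * pos sigma (times i) k + (t - times i) * pos sigma (times (S i)) k)
    / (times (S i) - times i).

Definition segment_sq_dist (d : nat) (times : nat -> R) (pos : nat -> R -> point)
    (i sigma psi : nat) (t : R) : R :=
  sumR d (fun k => (segment_pos times pos i sigma k t - segment_pos times pos i psi k t) ^ 2).

Section Segment.

Variables (d n : nat) (times : nat -> R) (pos : nat -> R -> point) (i : nat).
Hypothesis Hi : times i < times (S i).

Let G sigma := segment_sq_dist d times pos i sigma.

Lemma segment_sq_dist_quadratic sigma psi : quadratic (G sigma psi).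
Proof.
  apply quadratic_sumR. intros k.
  set (h := times (S i) - times i).
  set (P0 := pos sigma (times i) k - pos psi (times i) k).
  set (P1 := pos sigma (times (S i)) k - pos psi (times (S i)) k).
  destruct (quadratic_square_affine ((times (S i) * P0 - times i * P1) / h) ((P1 - P0) / h))
    as [qa [qb [qc Hq]]].
  exists qa, qb, qc. intros t. rewrite <- Hq. f_equal.
  unfold segment_pos, P0, P1, h. field. lra.
Qed.

Lemma segment_sq_dist_twice sigma sigma' x y : meets_at_most_twice (G sigma x) (G sigma' y).
Proof.
  apply quadratic_meets_at_most_twice, quadratic_sub; apply segment_sq_dist_quadratic.
Qed.

Lemma segment_families : (1 <= n)%nat -> exists B, forall sigma, (sigma < n)%nat ->
  family_with_crossings n (times i) (times (S i)) (G sigma) B.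
Proof.
  intros Hn.
  destruct (finite_union_In n (fun sigma t => exists x y, (x < n)%nat /\ (y < n)%nat /\
    G sigma x t = G sigma y t /\ exists s, G sigma x s <> G sigma y s)) as [B HB].
  { intros sigma _.
    destruct (crossings_finite n (G sigma)) as [l Hl].
    - intros x y _ _. apply segment_sq_dist_twice.
    - exists l. intros t [x [y [Hx [Hy [Ht Hne]]]]]. eauto. }
  exists B. intros sigma Hsigma. split; [|split; [|split; [|split]]]; auto.
  - intros x t. apply sumR_ge0. intros k. apply pow2_ge_0.
  - intros x. apply quadratic_continuity, segment_sq_dist_quadratic.
  - intros x y _ _. apply segment_sq_dist_twice.
  - intros x y t Hx Hy _ Ht Hne. apply (HB sigma); eauto 7.
Qed.

Lemma Dfun_sqrt_envelope tau sigma s : piecewise_linear d n tau times pos ->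
  (i < tau)%nat -> (sigma < n)%nat -> times i <= s <= times (S i) ->
  Dfun d n pos sigma s = sqrt (envelope n (G sigma) s).
Proof.
  intros Hpl Hitau Hsigma Hs. unfold Dfun, envelope.
  rewrite <- maxR_sqrt by (intros; apply sumR_ge0; intros; apply pow2_ge_0).
  apply maxR_ext. intros x Hx. unfold Defs.dist, G, segment_sq_dist. f_equal.
  apply sumR_ext. intros k Hk. unfold segment_pos. rewrite !(Hpl _ i s k); auto.
Qed.

End Segment.

Section Intersections.

Variables (d n tau : nat) (times : nat -> R) (pos : nat -> R -> point).
Hypothesis times_incr : forall i, (i < tau)%nat -> times i < times (S i).
Hypothesis Hpl : piecewise_linear d n tau times pos.

Lemma times_le i j : (i <= j)%nat -> (j <= tau)%nat -> times i <= times j.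
Proof.
  induction 1 as [|j Hij IH]; intros Hj; [lra|].
  specialize (IH ltac:(lia)). specialize (times_incr j ltac:(lia)). lra.
Qed.

Lemma segment_containing k t : (1 <= k)%nat -> times 0%nat <= t <= times k ->
  exists i, (i < k)%nat /\ times i <= t <= times (S i).
Proof.
  induction k as [|k IH]; intros Hk Ht; [lia|].
  destruct (Nat.eq_dec k 0) as [->|Hk0]; [exists 0%nat; split; [lia | lra]|].
  destruct (Rle_dec t (times k)) as [Htk|Htk].
  - destruct IH as [i [Hi Hti]]; [lia | lra |]. exists i. split; [lia | auto].
  - exists k. split; [lia | lra].
Qed.

Variables sigma psi : nat.
Hypotheses (Hsigma : (sigma < n)%nat) (Hpsi : (psi < n)%nat).

Lemma intersections_in_open_segment i (Z : list R) : (i < tau)%nat -> NoDup Z ->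
  (forall z, In z Z -> times i < z < times (S i) /\ is_intersection d n tau times pos sigma psi z) ->
  (length Z <= (4 * n + 1) * 2)%nat.
Proof.
  intros Hi Hnd HZ.
  assert (Hti := times_incr i Hi).
  assert (H0i : times 0%nat <= times i) by (apply times_le; lia).
  assert (HiS : times (S i) <= times tau) by (apply times_le; lia).
  destruct (segment_families d n times pos i Hti ltac:(lia)) as [B HB].
  apply (isolated_meetings_length n (times i) (times (S i))
    (segment_sq_dist d times pos i sigma) (segment_sq_dist d times pos i psi) B); auto.
  - intros x y _ _. apply segment_sq_dist_twice; auto.
  - assert (Heq : forall s, times i <= s <= times (S i) ->
      Dfun d n pos sigma s = Dfun d n pos psi s <->
      envelope n (segment_sq_dist d times pos i sigma) s =
      envelope n (segment_sq_dist d times pos i psi) s).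
    { intros s Hs. rewrite !(Dfun_sqrt_envelope d n times pos i tau) by auto.
      split; [apply sqrt_inj; apply maxR_ge0 | intros ->; auto]. }
    intros z Hz. destruct (HZ z Hz) as [Hzi [_ [_ [_ [Hzeq [eps [Heps Hiso]]]]]]].
    split; auto. split; [apply Heq; auto; lra|].
    exists eps. split; auto. intros s Hs Hsz Hne Hseq.
    apply (Hiso s); auto; [lra|]. apply Heq; auto. lra.
Qed.

Lemma intersections_in_segment i (Z : list R) : (i < tau)%nat -> NoDup Z ->
  (forall z, In z Z -> times i <= z <= times (S i) /\ is_intersection d n tau times pos sigma psi z) ->
  (length Z <= 2 + (4 * n + 1) * 2)%nat.
Proof.
  intros Hi Hnd HZ.
  destruct (NoDup_partition R (fun z => z = times i \/ z = times (S i)) Z Hnd)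
    as [l1 [l2 [N1 [N2 [P1 [P2 Hlen]]]]]].
  assert (length l1 <= 2)%nat.
  { apply NoDup_length_le_2; auto. intros x y z Hx Hy Hz.
    destruct (P1 x Hx) as [_ [-> | ->]], (P1 y Hy) as [_ [-> | ->]], (P1 z Hz) as [_ [-> | ->]];
      tauto. }
  assert (length l2 <= (4 * n + 1) * 2)%nat.
  { apply (intersections_in_open_segment i); auto. intros z Hz.
    destruct (P2 z Hz) as [HzZ Hends]. destruct (HZ z HzZ) as [[Hl Hr] Hint].
    split; auto. split; [destruct Hl as [| <-] | destruct Hr as [| ->]]; tauto. }
  lia.
Qed.

Lemma intersections_of_pair (Z : list R) : (1 <= tau)%nat -> NoDup Z ->
  (forall z, In z Z -> is_intersection d n tau times pos sigma psi z) ->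
  (length Z <= tau * (2 + (4 * n + 1) * 2))%nat.
Proof.
  intros Htau Hnd HZ. rewrite <- (length_seq tau 0) at 1.
  apply (NoDup_length_le_cover R (fun i z =>
    times i <= z <= times (S i) /\ is_intersection d n tau times pos sigma psi z)); auto.
  - intros z Hz. destruct (HZ z Hz) as [_ [_ [Hrange _]]].
    destruct (segment_containing tau z Htau Hrange) as [i [Hi Hzi]].
    exists i. split; [apply in_seq; lia | auto].
  - intros i l Hi. apply in_seq in Hi. intros. apply (intersections_in_segment i); auto. lia.
Qed.

End Intersections.

Lemma intersections_length d n tau times pos (L : list (nat * nat * R)) :
  (1 <= tau)%nat -> (forall i, (i < tau)%nat -> times i < times (S i)) ->
  piecewise_linear d n tau times pos -> NoDup L ->
  (forall sigma psi t, In (sigma, psi, t) L -> is_intersection d n tau times pos sigma psi t) ->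
  (length L <= n * (n * (tau * (2 + (4 * n + 1) * 2))))%nat.
Proof.
  intros Htau Hincr Hpl Hnd HL.
  rewrite <- (length_seq n 0) at 1 2.
  apply (NoDup_length_le_cover _ (fun sigma e => In e L /\ fst (fst e) = sigma)); auto.
  { intros [[sigma psi] t] He. exists sigma. split; auto.
    apply in_seq. destruct (HL sigma psi t He) as [Hsp [Hpsi _]]. lia. }
  intros sigma Ls Hsigma Hnds HLs.
  apply (NoDup_length_le_cover _ (fun psi e => In e Ls /\ snd (fst e) = psi)); auto.
  { intros [[sigma' psi] t] He. exists psi. split; auto.
    apply in_seq. destruct (HLs _ He) as [HeL _].
    destruct (HL sigma' psi t HeL) as [_ [Hpsi _]]. lia. }
  intros psi Lp Hpsi Hndp HLp. apply in_seq in Hsigma, Hpsi.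
  assert (Hpair : forall e, In e Lp -> In e L /\ fst e = (sigma, psi)).
  { intros [[s p] t] He. destruct (HLp _ He) as [HeLs Hp]. destruct (HLs _ HeLs) as [HeL Hs].
    simpl in *. subst. auto. }
  rewrite <- (length_map snd Lp).
  apply (intersections_of_pair d n tau times pos Hincr Hpl sigma psi); try lia.
  - apply NoDup_map_NoDup_ForallPairs; auto.
    intros e e' He He' Hsnd. destruct (Hpair e He) as [_ E], (Hpair e' He') as [_ E'].
    destruct e, e'. simpl in *. congruence.
  - intros t Ht. apply in_map_iff in Ht as [[[s p] t'] [<- He]].
    destruct (Hpair _ He) as [HeL E]. simpl in E. inversion E. subst. apply HL; auto.
Qed.

Theorem mainTheorem11 :
  exists C : R, forall (d n tau : nat) (times : nat -> R)
    (pos : nat -> R -> point),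
    (1 <= tau)%nat ->
    (forall i, (i < tau)%nat -> times i < times (S i)) ->
    piecewise_linear d n tau times pos ->
    forall L : list (nat * nat * R),
      NoDup L ->
      (forall sigma psi t, In (sigma, psi, t) L ->
         is_intersection d n tau times pos sigma psi t) ->
      INR (length L) <= C * INR tau * INR n ^ 3.
Proof.
  exists 12. intros d n tau times pos Htau Hincr Hpl L Hnd HL.
  assert (Hbound : (length L <= 12 * tau * n ^ 3)%nat).
  { eapply Nat.le_trans; [apply (intersections_length d n tau times pos); auto|].
    destruct n; simpl; nia. }
  apply le_INR in Hbound. rewrite !mult_INR, pow_INR in Hbound.
  replace (INR 12) with 12 in Hbound by (simpl; ring). exact Hbound.
Qed.
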